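(* Let $\mathcal{H}=([n],E=\{e_1,\dots,e_m\})$ be a 3-uniform hypergraph with $n$ vertices and $m=cn$ hyperedges. Suppose $\mathcal{H}$ is $(\epsilon,100c)$-degree bounded and $(\beta,\gamma)$-asymmetric, where $\gamma\ge 200\epsilon$. Let $\mathcal{C}=\{C_1,\dots,C_m\}$ be an arbitrary 3XOR instance with $n$ variables and $m$ constraints based on $\mathcal{H}$ (i.e. $e_i$ is the set of indices of the three variables used by $C_i$). Set $\delta=\min\{\frac{1}{200},\frac{\gamma}{48},\frac{\epsilon}{95c}\}$. If $\mathrm{GI}(G_{\mathcal{C}},G_{\mathcal{C}^0})\ge 1-\delta$, then $\mathrm{val}(\mathcal{C})\ge 0.9-100(\epsilon+\beta)$.
   Context: A hypergraph is $(\epsilon,D)$-degree bounded if every set of an $\epsilon$ fraction of its vertices has average degree at most $D$ (degree = number of hyperedges containing the vertex). For a hypergraph $\mathcal{H}=(V,E)$ and a permutation $\pi$ of $V$, $\mathrm{AUT}(\mathcal{H};\pi)=|\{e\in E:\pi(e)\in E\}|/|E|$; $\mathcal{H}$ is $(\beta,\gamma)$-asymmetric if every permutation with at most a $(1-\beta)$ fraction of the vertices as fixed points has $\mathrm{AUT}(\mathcal{H};\pi)<1-\gamma$. 3XOR instance: equations $x_{j_1}+x_{j_2}+x_{j_3}=b$ over $\mathbb{Z}_2$; $\mathrm{val}(\mathcal{C})$ is the maximum fraction of equations satisfiable by an assignment; $\mathcal{C}^0$ sets all right-hand sides to $0$. Graph $G_{\mathcal{C}}$: for each variable $x$, two variable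 vertices $x\mapsto0,x\mapsto1$ joined by an edge; for each equation $C$ on $x_1,x_2,x_3$, four constraint vertices, one per satisfying assignment $(x_1\mapsto a_1,x_2\mapsto a_2,x_3\mapsto a_3)$, forming a clique, each adjacent to the variable vertices $x_i\mapsto a_i$; variable vertices shared, constraint vertices not. $\mathrm{GI}(G,H)=\max_\pi\frac{|\{e\in E(G):\pi(e)\in E(H)\}|}{\max\{|E(G)|,|E(H)|\}}$ over bijections $\pi$. *)

From HB Require Import structures.
From mathcomp Require Import all_boot all_order all_algebra all_fingroup.
Set Implicit Arguments. Unset Strict Implicit. Unset Printing Implicit Defensive.
Import Order.TTheory GRing.Theory Num.Theory.
Local Open Scope ring_scope.

Section Defs.
Variable R : realFieldType.

Definition hedges (n m : nat) (he : 'I_m -> {set 'I_n}) : {set {set 'I_n}} :=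
  [set he i | i : 'I_m].

Definition hdeg (n m : nat) (he : 'I_m -> {set 'I_n}) (v : 'I_n) : nat :=
  #|[set e in hedges he | v \in e]|.

Definition degree_bounded (n m : nat) (he : 'I_m -> {set 'I_n}) (eps D : R) : Prop :=
  forall S : {set 'I_n}, (#|S|%:R <= eps * n%:R) ->
    \sum_(v in S) ((hdeg he v)%:R : R) <= D * (eps * n%:R).

Definition AUT (n : nat) (E : {set {set 'I_n}}) (pi : {perm 'I_n}) : R :=
  (#|[set e in E | (pi @: e) \in E]|)%:R / (#|E|)%:R.

Definition asymmetric (n m : nat) (he : 'I_m -> {set 'I_n}) (beta gamma : R) : Prop :=
  forall pi : {perm 'I_n},
    (#|[set x | pi x == x]|)%:R <= (1 - beta) * n%:R ->
    AUT (hedges he) pi < 1 - gamma.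

Definition sat3 (n : nat) (vs : 'I_3 -> 'I_n) (b : bool) (x : {ffun 'I_n -> bool}) : bool :=
  (\big[addb/false]_(k < 3) x (vs k)) == b.

Definition val3 (n m : nat) (vars : 'I_m -> 'I_3 -> 'I_n) (rhs : 'I_m -> bool) : R :=
  (\max_(x : {ffun 'I_n -> bool}) #|[set i : 'I_m | sat3 (vars i) (rhs i) x]|)%:R / m%:R.

(* ---------- the graph G_C ----------
   variable vertices (x, a) ~ "x |-> a";
   constraint vertices (i, (a1, a2)) ~ the satisfying assignment
   (x1 |-> a1, x2 |-> a2, x3 |-> a1 + a2 + b_i) of constraint i *)
Definition gvert (n m : nat) : finType := (('I_n * bool) + ('I_m * (bool * bool)))%type.

Definition asg (b : bool) (p : bool * bool) (k : 'I_3) : bool :=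
  match val k with
  | 0%N => p.1
  | 1%N => p.2
  | _ => addb (addb p.1 p.2) b
  end.

Definition gadj (n m : nat) (vars : 'I_m -> 'I_3 -> 'I_n) (rhs : 'I_m -> bool)
    (u v : gvert n m) : bool :=
  match u, v with
  | inl (x, a), inl (y, a') => (x == y) && (a != a')
  | inr (i, p), inr (j, q) => (i == j) && (p != q)
  | inr (i, p), inl (x, a) => [exists k : 'I_3, (vars i k == x) && (asg (rhs i) p k == a)]
  | inl (x, a), inr (i, p) => [exists k : 'I_3, (vars i k == x) && (asg (rhs i) p k == a)]
  end.

Definition gedges (n m : nat) (vars : 'I_m -> 'I_3 -> 'I_n) (rhs : 'I_m -> bool)
    : {set {set gvert n m}} :=
  [set s : {set gvert n m} | (#|s| == 2%N) &&
     [forall u in s, forall v in s, (u != v) ==> gadj vars rhs u v]].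

Definition GI (V : finType) (EG EH : {set {set V}}) : R :=
  (\max_(pi : {perm V}) #|[set e in EG | (pi @: e) \in EH]|)%:R / (maxn #|EG| #|EH|)%:R.

End Defs.

(* Decode an assignment from the optimal bijection pi: x gets the value b such that pi maps the
   vertex x |-> 0 of G_C to a vertex y |-> b of G_{C^0}.  A 4-clique of G_{C^0} (with injective
   variable maps) consists of the four constraint vertices of one equation, since no triangle lies
   in the neighbourhood of a variable vertex.  Hence if pi preserves the 18 edges of the gadget
   of an equation C_i, it maps this gadget onto the gadget of an equation C_j of C^0, and the
   parity 0 of C_j is transported back to the parity b_i of C_i under the decoded assignment.
   So every equation falsified by the decoded assignment has a gadget edge broken by pi, and
   there are at most delta |E(G_C)| <= delta (n + 18 m) of those.
   Asymmetry makes H dense: if n > 10 m, cyclically permuting the vertices missed by all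
   hyperedges is an automorphism of H with few fixed points.  So c >= 1/10, and then
   delta (n + 18 m) <= (100 eps + 1/10) m. *)

From HB Require Import structures.
From mathcomp Require Import all_boot all_order all_algebra all_fingroup.
From mathcomp Require Import zify ring lra.
Import Order.TTheory GRing.Theory Num.Theory.
Set Implicit Arguments. Unset Strict Implicit. Unset Printing Implicit Defensive.

Lemma sum_asg b r : \big[addb/false]_(k < 3) asg b r k = b.
Proof. by rewrite !big_ord_recl big_ord0 /asg /=; case: r b => [[] []] []. Qed.

Lemma exists_asg b (k : 'I_3) a : exists r, asg b r k = a.
Proof.
case: k => [[|[|[|//]]] lt_k3].
- by exists (a, false).
- by exists (false, a).
- by exists (a (+) b, false); rewrite /asg /= addbF addbK.
Qed.

Lemma asg_fiber b (r1 r2 r3 : bool * bool) (k : 'I_3) a :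
  r1 != r2 -> r1 != r3 -> r2 != r3 ->
  asg b r1 k = a -> asg b r2 k = a -> asg b r3 k != a.
Proof.
rewrite /asg; case: k => [[|[|[|//]]] ?] /=;
by case: r1 r2 r3 => [[] []] [[] []] [[] []]; case: b; case: a.
Qed.

Lemma ord3_pigeonhole (x y z w : 'I_3) :
  x != y -> x != z -> x != w -> y != z -> y != w -> z != w -> False.
Proof.
rewrite -!val_eqE /=; have := ltn_ord x; have := ltn_ord y; have := ltn_ord z.
have := ltn_ord w; lia.
Qed.

Section ConstraintGraph.
Variables (n m : nat) (vars : 'I_m -> 'I_3 -> 'I_n) (rhs : 'I_m -> bool).
Local Notation adj := (gadj vars rhs).

Lemma gadjC u v : adj u v = adj v u.
Proof.
case: u => [[x a]|[i p]]; case: v => [[y b]|[j q]] //=.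
  by rewrite eq_sym (eq_sym b).
by rewrite eq_sym (eq_sym q).
Qed.

Lemma gadjxx u : adj u u = false.
Proof. by case: u => [[x a]|[i p]]; rewrite /= !eqxx. Qed.

Lemma mem_gedges2 u v : ([set u; v] \in gedges vars rhs) = adj u v.
Proof.
rewrite inE cards2; have [->|neq_uv] := eqVneq u v; first by rewrite gadjxx.
apply/forall_inP/idP => [adj_all | adj_uv w].
  by have /forall_inP/(_ v (set22 u v)) := adj_all u (set21 u v); rewrite neq_uv.
rewrite !inE => /orP[] /eqP ->; apply/forall_inP => z; rewrite !inE.
  by case/orP => /eqP ->; rewrite ?eqxx // adj_uv implybT.
by case/orP => /eqP ->; rewrite ?eqxx // gadjC adj_uv implybT.
Qed.

Lemma mem_imset_gedges2 (f : gvert n m -> gvert n m) u v :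
  (f @: [set u; v] \in gedges vars rhs) = adj (f u) (f v).
Proof. by rewrite imsetU1 imset_set1 mem_gedges2. Qed.

Lemma card_gedges : #|gedges vars rhs| <= n + 18 * m.
Proof.
pose var_edges := [set [set (inl (x, false) : gvert n m); inl (x, true)] | x : 'I_n].
pose incidences :=
  [set [set (inr t.1 : gvert n m); inl (vars t.1.1 t.2, asg (rhs t.1.1) t.1.2 t.2)]
  | t : ('I_m * (bool * bool)) * 'I_3].
pose con_edges := [set [set (inr (t.1, p) : gvert n m) | p in (t.2 : {set bool * bool})]
                   | t in setX [set: 'I_m] [set P : {set bool * bool} | #|P| == 2]].
have sub : gedges vars rhs \subset var_edges :|: incidences :|: con_edges.
  apply/subsetP => e e_edge; have /cards2P[u [v [_ def_e]]] : #|e| == 2.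
    by move: e_edge; rewrite inE => /andP[].
  move: e_edge; rewrite {e}def_e mem_gedges2 !inE.
  case: u => [[x a]|[i p]]; case: v => [[y b]|[j q]] /=.
  - case/andP => /eqP <- neq_ab; apply/orP; left; apply/orP; left; apply/imsetP.
    exists x => //; apply/setP => z; rewrite !inE.
    by case: a b neq_ab => [] [] //= _; rewrite orbC.
  - case/existsP => k /andP[/eqP <- /eqP <-]; apply/orP; left; apply/orP; right.
    by apply/imsetP; exists ((j, q), k) => //; apply/setP => z; rewrite !inE orbC.
  - case/existsP => k /andP[/eqP <- /eqP <-]; apply/orP; left; apply/orP; right.
    by apply/imsetP; exists ((i, p), k).
  - case/andP => /eqP <- neq_pq; apply/orP; right; apply/imsetP.
    exists (i, [set p; q]); first by rewrite !inE cards2 neq_pq.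
    by rewrite /= imsetU1 imset_set1.
have card_var : #|var_edges| <= n by rewrite (leq_trans (leq_imset_card _ _)) ?card_ord.
have card_inc : #|incidences| <= 12 * m.
  by rewrite (leq_trans (leq_imset_card _ _)) // !card_prod !card_ord card_bool; lia.
have card_con : #|con_edges| <= 6 * m.
  rewrite (leq_trans (leq_imset_card _ _)) // cardsX cardsT card_ord card_draws.
  by rewrite card_prod card_bool mulnC.
rewrite (leq_trans (subset_leq_card sub)) // (leq_trans (leq_card_setU _ _)) //.
rewrite (leq_trans (leq_add (leq_card_setU _ _) (leqnn _))) // -addnA.
by rewrite leq_add // (leq_trans (leq_add card_inc card_con)) // -mulnDl.
Qed.

Hypothesis vars_inj : forall i, injective (vars i).

Lemma triangle_at_var x a b c :
  adj (inl (x, a)) b -> adj (inl (x, a)) c -> adj b c ->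
  exists j k rb rc, [/\ b = inr (j, rb), c = inr (j, rc), vars j k = x,
                        asg (rhs j) rb k = a & asg (rhs j) rc k = a].
Proof.
case: b => [[y b]|[j rb]]; case: c => [[z c]|[j' rc]] /=.
- move=> /andP[/eqP <- neq_ab] /andP[/eqP <- neq_ac] /andP[_ neq_bc].
  by move: neq_ab neq_ac neq_bc; case: a; case: b; case: c.
- move=> /andP[/eqP <- neq_ab] /existsP[k /andP[/eqP xk /eqP rck]].
  case/existsP => k' /andP[/eqP xk' /eqP rck'].
  by move: neq_ab; rewrite -rck -rck' (vars_inj (etrans xk' (esym xk))) eqxx.
- move=> /existsP[k /andP[/eqP xk /eqP rbk]] /andP[/eqP <- neq_ac].
  case/existsP => k' /andP[/eqP xk' /eqP rbk'].
  by move: neq_ac; rewrite -rbk -rbk' (vars_inj (etrans xk' (esym xk))) eqxx.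
- move=> /existsP[k /andP[/eqP xk /eqP rbk]] /existsP[k' /andP[/eqP xk' /eqP rck']].
  case/andP => /eqP ejj' _; subst j'.
  have ekk' := vars_inj (etrans xk' (esym xk)); subst k'.
  by exists j, k, rb, rc.
Qed.

Lemma clique4_inr a b c d :
  adj a b -> adj a c -> adj a d -> adj b c -> adj b d -> adj c d ->
  exists jr, a = inr jr.
Proof.
case: a => [[x al]|jr]; last by exists jr.
move=> ab ac ad bc bd cd; exfalso.
have [j [k [rb [rc [eb ec xk rbk rck]]]]] := triangle_at_var ab ac bc.
have [j' [k' [rb' [rd [eb' ed xk' _ rdk]]]]] := triangle_at_var ab ad bd.
move: eb'; rewrite eb => -[ejj' _]; subst j' b c d.
move: bc bd cd; rewrite /= !eqxx /= => rbc rbd rcd.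
rewrite (vars_inj (etrans xk' (esym xk))) in rdk.
by have := asg_fiber rbc rbd rcd rbk rck; rewrite rdk eqxx.
Qed.

End ConstraintGraph.

(* The trace of a gadget-preserving bijection: the constraint vertex p of an equation with
   right-hand side b goes to the constraint vertex rho p of an equation with right-hand side 0,
   and the variable vertex (x_k |-> a) goes to (x'_K |-> B), where (K, B) = sigma (k, a). *)
Section GadgetParity.
Variables (b : bool) (rho : bool * bool -> bool * bool).
Variable sigma : 'I_3 * bool -> 'I_3 * bool.
Hypothesis sigma_inj : injective sigma.
Hypothesis sigma_adj :
  forall p k, asg false (rho p) (sigma (k, asg b p k)).1 = (sigma (k, asg b p k)).2.

Let K p k := (sigma (k, asg b p k)).1.

Let K_inj p : injective (K p).
Proof.
move=> k k' eK; have : sigma (k, asg b p k) = sigma (k', asg b p k').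
  by rewrite [LHS]surjective_pairing [RHS]surjective_pairing -!sigma_adj -/(K p k) eK.
by move/sigma_inj => [].
Qed.

Let parity p : \big[addb/false]_(k < 3) (sigma (k, asg b p k)).2 = false.
Proof.
under eq_bigr do rewrite -sigma_adj.
change (\big[addb/false]_(k < 3) asg false (rho p) (K p k) = false).
by rewrite -(reindex_inj (P := xpredT) (F := asg false (rho p)) (@K_inj p)) sum_asg.
Qed.

Lemma gadget_parity : \big[addb/false]_(k < 3) (sigma (k, false)).2 = b.
Proof.
have := parity (false, false); have := parity (true, false).
rewrite !big_ord_recl !big_ord0 /asg /=.
set k2 : 'I_3 := lift ord0 (lift ord0 ord0); set k1 : 'I_3 := lift ord0 ord0.
have K_neq p k k' : k != k' -> K p k != K p k' by rewrite (inj_eq (@K_inj p)).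
(* Either sigma flips the value of x_0, and two parity constraints give the claim, or it moves
   x_0 |-> 0 and x_0 |-> 1 to different variables, which yields four distinct indices in 'I_3. *)
have [eB0|neB0] := eqVneq (sigma (ord0, false)).2 (sigma (ord0, true)).2.
  have neK0 : (sigma (ord0, false)).1 != (sigma (ord0, true)).1.
    apply: contra_neq (_ : (ord0, false) != (ord0, true)) => // eK0; apply: sigma_inj.
    by rewrite [LHS]surjective_pairing [RHS]surjective_pairing eK0 eB0.
  have := K_neq (false, false) ord0 k1 isT; have := K_neq (false, false) ord0 k2 isT.
  have := K_neq (false, false) k1 k2 isT; have := K_neq (true, false) ord0 k1 isT.
  have := K_neq (true, true) ord0 k2 isT; rewrite /K /asg /= => wz wy yz xz xy _ _.
  by case: (ord3_pigeonhole xy xz neK0 yz); rewrite eq_sym.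
case hb: b => e10 e00; last exact: e00.
by move: neB0 e10; case: (sigma (ord0, false)).2; case: (sigma (ord0, true)).2;
  case: (sigma (k1, false)).2; case: (sigma (k2, false)).2.
Qed.
End GadgetParity.

Definition perm_assignment n m (pi : {perm gvert n m}) : {ffun 'I_n -> bool} :=
  [ffun x => if pi (inl (x, false)) is inl (_, b) then b else false].

Section GadgetPreservation.
Variables (n m : nat) (vars : 'I_m -> 'I_3 -> 'I_n) (rhs : 'I_m -> bool).
Hypothesis vars_inj : forall i, injective (vars i).
Variables (pi : {perm gvert n m}) (i : 'I_m).
Local Notation adj0 := (gadj vars (fun _ => false)).
Hypothesis clique_preserved :
  forall p q, p != q -> adj0 (pi (inr (i, p))) (pi (inr (i, q))).
Hypothesis incidence_preserved :
  forall p k, adj0 (pi (inr (i, p))) (pi (inl (vars i k, asg (rhs i) p k))).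

Let con_image : exists j rho, forall p, pi (inr (i, p)) = inr (j, rho p).
Proof.
have con_img p : exists jr, pi (inr (i, p)) = inr jr.
  pose v q := pi (inr (i, q)); have K4 := clique4_inr vars_inj (rhs := fun _ => false).
  case: p => [[] []]; [ apply: (K4 _ (v (true, false)) (v (false, true)) (v (false, false)))
                      | apply: (K4 _ (v (true, true)) (v (false, true)) (v (false, false)))
                      | apply: (K4 _ (v (true, true)) (v (true, false)) (v (false, false)))
                      | apply: (K4 _ (v (true, true)) (v (true, false)) (v (false, true))) ];
  by apply: clique_preserved.
have [f def_f] := fin_all_exists con_img.
exists (f (false, false)).1, (fun p => (f p).2) => p.
rewrite def_f [f p]surjective_pairing; congr (inr (_, _)).
have [-> // | neq_p] := eqVneq p (false, false); have := clique_preserved neq_p.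
by rewrite !def_f [f p]surjective_pairing [f (false, false)]surjective_pairing => /andP[/eqP].
Qed.

Lemma perm_assignment_sat : sat3 (vars i) (rhs i) (perm_assignment pi).
Proof.
have [j [rho def_rho]] := con_image.
have rho_inj : injective rho.
  move=> p q eq_rho; have /perm_inj[] // : pi (inr (i, p)) = pi (inr (i, q)).
  by rewrite !def_rho eq_rho.
have var_img (ka : 'I_3 * bool) : exists KB : 'I_3 * bool,
    pi (inl (vars i ka.1, ka.2)) = inl (vars j KB.1, KB.2).
  have [p asg_p] := exists_asg (rhs i) ka.1 ka.2; have := incidence_preserved p ka.1.
  rewrite asg_p def_rho; case def_w: (pi _) => [[y B] | [j' r]] /=.
    by case/existsP => K /andP[/eqP <- _]; exists (K, B).
  case/andP => /eqP ejj' _; have /codomP[q def_r] := injF_onto rho_inj r.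
  by have := def_rho q; rewrite -def_r ejj' -def_w => /perm_inj.
have [sigma def_sigma] := fin_all_exists var_img.
apply/eqP; rewrite -[rhs i](@gadget_parity _ rho sigma).
- by apply: eq_bigr => k _; rewrite ffunE (def_sigma (k, false)).
- move=> [k a] [k' a'] eq_sigma.
  have /perm_inj[/vars_inj -> ->] // : pi (inl (vars i k, a)) = pi (inl (vars i k', a')).
  by rewrite !(def_sigma (_, _)) eq_sigma.
- move=> p k; have := incidence_preserved p k; rewrite def_rho (def_sigma (k, _)) /=.
  by case/existsP => K /andP[/eqP /vars_inj -> /eqP].
Qed.

End GadgetPreservation.

Definition con_of n m (e : {set gvert n m}) : option 'I_m :=
  [pick i | [exists p, inr (i, p) \in e]].

Lemma con_of_set2 n m (i : 'I_m) p (w : gvert n m) :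
  (forall j r, w = inr (j, r) -> j = i) -> con_of [set inr (i, p); w] = Some i.
Proof.
move=> w_con; rewrite /con_of; case: pickP => [j /existsP[r] | no_con].
  by rewrite !inE => /orP[/eqP[->] | /eqP/esym/w_con ->].
by have := no_con i; rewrite (introT existsP) //; exists p; rewrite !inE eqxx.
Qed.

Section UnsatisfiedConstraints.
Variables (n m : nat) (vars : 'I_m -> 'I_3 -> 'I_n) (rhs : 'I_m -> bool).
Hypothesis vars_inj : forall i, injective (vars i).
Variable pi : {perm gvert n m}.

Lemma card_unsat_le_unpreserved :
  #|[set i | ~~ sat3 (vars i) (rhs i) (perm_assignment pi)]| <=
  #|[set e in gedges vars rhs | pi @: e \notin gedges vars (fun _ => false)]|.
Proof.
set unpreserved := [set e in _ | _].
rewrite -(card_imset _ (@Some_inj _)).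
rewrite (leq_trans _ (leq_imset_card (@con_of n m) unpreserved)) //.
apply/subset_leq_card/subsetP => o /imsetP[i]; rewrite inE => unsat ->.
apply: contraNT unsat => /imsetP no_unpreserved.
apply: perm_assignment_sat => // [p q neq_pq | p k].
  apply: contra_notT no_unpreserved => not_adj; exists [set inr (i, p); inr (i, q)].
    by rewrite inE mem_gedges2 mem_imset_gedges2 (negbTE not_adj) /= eqxx neq_pq.
  by rewrite con_of_set2 // => j r [->].
apply: contra_notT no_unpreserved => not_adj.
exists [set inr (i, p); inl (vars i k, asg (rhs i) p k)]; last by rewrite con_of_set2.
rewrite inE mem_gedges2 mem_imset_gedges2 (negbTE not_adj) andbT /=.
by apply/existsP; exists k; rewrite !eqxx.
Qed.

End UnsatisfiedConstraints.

Local Open Scope ring_scope.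

Section GraphIsomorphism.
Variables (R : realFieldType) (V : finType) (EG EH : {set {set V}}).
Local Notation preserved pi := [set e in EG | pi @: e \in EH].

Lemma card_preserved_le (pi : {perm V}) : (#|preserved pi| <= maxn #|EG| #|EH|)%N.
Proof. by rewrite setIdE (leq_trans (subset_leq_card (subsetIl _ _))) ?leq_maxl. Qed.

Lemma GI_le1 : GI R EG EH <= 1.
Proof.
rewrite /GI; have [-> | M_gt0] := posnP (maxn #|EG| #|EH|); first by rewrite invr0 mulr0 ler01.
rewrite ler_pdivrMr ?ltr0n // mul1r ler_nat.
by apply/bigmax_leqP => pi _; apply: card_preserved_le.
Qed.

Lemma GI_witness : exists pi : {perm V},
  #|[set e in EG | pi @: e \notin EH]|%:R <= (1 - GI R EG EH) * (maxn #|EG| #|EH|)%:R.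
Proof.
have perms_gt0 : (0 < #|{perm V}|)%N by apply/card_gt0P; exists 1%g.
have [pi def_GI] := @bigop.eq_bigmax _ (fun pi : {perm V} => #|preserved pi|) perms_gt0.
exists pi; set M := maxn _ _.
have split_EG : (#|preserved pi| + #|[set e in EG | pi @: e \notin EH]| = #|EG|)%N.
  rewrite -(cardsID [set e : {set V} | pi @: e \in EH] EG) setIdE.
  by congr (_ + _)%N; apply: eq_card => e; rewrite !inE andbC.
have preservedE : #|preserved pi|%:R = GI R EG EH * M%:R.
  rewrite /GI def_GI -/M; have [M0 | M_gt0] := posnP M; last by rewrite divfK ?pnatr_eq0 -?lt0n.
  by have := card_preserved_le pi; rewrite -/M M0 leqn0 => /eqP ->; rewrite !mulr0.
have EG_le_M : #|EG|%:R <= M%:R :> R by rewrite ler_nat leq_maxl.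
have /eqP := split_EG; rewrite -(eqr_nat R) natrD => /eqP; lra.
Qed.

End GraphIsomorphism.

Lemma val3_ge_GI (R : realFieldType) n m (vars : 'I_m -> 'I_3 -> 'I_n) (rhs : 'I_m -> bool) :
  (forall i, injective (vars i)) -> (0 < m)%N ->
  1 - (1 - GI R (gedges vars rhs) (gedges vars (fun _ => false))) * (n + 18 * m)%:R / m%:R
    <= val3 R vars rhs.
Proof.
move=> vars_inj m_gt0.
have [pi unpreserved_le] := GI_witness R (gedges vars rhs) (gedges vars (fun _ => false)).
set D := 1 - GI _ _ _ in unpreserved_le *.
have unsat_le := card_unsat_le_unpreserved rhs vars_inj pi.
set sat := [set i | sat3 (vars i) (rhs i) (perm_assignment pi)].
have split_m : (#|sat| + #|[set i | ~~ sat3 (vars i) (rhs i) (perm_assignment pi)]| = m)%N.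
  rewrite -[RHS](card_ord m) -(cardsC sat).
  by congr (_ + _)%N; apply: eq_card => i; rewrite !inE.
have sat_le_val : #|sat|%:R / m%:R <= val3 R vars rhs.
  rewrite ler_wpM2r ?invr_ge0 // ler_nat.
  exact: (@bigop.leq_bigmax _ (fun x => #|[set i | sat3 (vars i) (rhs i) x]|)).
apply: le_trans sat_le_val; rewrite ler_pdivlMr ?ltr0n // mulrBl mul1r divfK ?pnatr_eq0 -?lt0n //.
have D_ge0 : 0 <= D by rewrite subr_ge0 GI_le1.
have M_le : D * (maxn #|gedges vars rhs| #|gedges vars (fun _ => false)|)%:R <= D * (n + 18 * m)%:R.
  by rewrite ler_wpM2l // ler_nat geq_max !card_gedges.
move/eqP: split_m unsat_le; rewrite -(ler_nat R) -(eqr_nat R) natrD => /eqP; lra.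
Qed.

Lemma GI_gedges_gt0 (R : realFieldType) n m (vars : 'I_m -> 'I_3 -> 'I_n)
    (rhs rhs' : 'I_m -> bool) :
  0 < GI R (gedges vars rhs) (gedges vars rhs') -> (0 < n + m)%N.
Proof.
rewrite lt0n; apply: contraTN => /eqP nm0; rewrite /GI.
suff -> : maxn #|gedges vars rhs| #|gedges vars rhs'| = 0%N by rewrite invr0 mulr0 ltxx.
by apply/eqP; rewrite -leqn0 geq_max !(leq_trans (card_gedges _ _)) //; lia.
Qed.

Lemma next_neq (T : eqType) (s : seq T) x :
  uniq s -> (1 < size s)%N -> x \in s -> next s x != x.
Proof.
case: s => [//|y p] s_uniq s_gt1 xs; rewrite next_nth xs.
have x_idx : (index x (y :: p) < size (y :: p))%N by rewrite index_mem.
rewrite -[X in _ != X](nth_index y xs).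
set i := index x (y :: p); case: (ltnP i (size p)) => [lt_ip | ge_ip].
  change (nth y (y :: p) i.+1 != nth y (y :: p) i).
  by rewrite nth_uniq //=; lia.
rewrite nth_default //; change (nth y (y :: p) 0 != nth y (y :: p) i).
by rewrite nth_uniq //=; move: x_idx s_gt1 ge_ip => /=; lia.
Qed.

Lemma exists_perm_moving (T : finType) (I : {set T}) :
  (1 < #|I|)%N -> exists pi : {perm T}, forall x, (pi x == x) = (x \notin I).
Proof.
move=> I_gt1; have I_uniq := enum_uniq (mem I).
exists (perm (can_inj (prev_next I_uniq))) => x; rewrite permE.
have [xI | xNI] := boolP (x \in I); last by rewrite next_nth mem_enum (negbTE xNI) eqxx.
by apply/negbTE/next_neq; rewrite // -?cardE // mem_enum.
Qed.

Lemma AUT_fix (R : realFieldType) n (E : {set {set 'I_n}}) (pi : {perm 'I_n}) :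
  E != set0 -> (forall e, e \in E -> {in e, pi =1 id}) -> AUT R E pi = 1.
Proof.
move=> E_neq0 pi_fix; rewrite /AUT.
have -> : [set e in E | pi @: e \in E] = E.
  apply/setP => e; rewrite inE; case eE: (e \in E) => //=.
  by rewrite (eq_in_imset (pi_fix e eE)) imset_id eE.
by rewrite divff // pnatr_eq0 cards_eq0.
Qed.

Lemma asymmetric_dense (R : realFieldType) n m (he : 'I_m -> {set 'I_n})
    (vars : 'I_m -> 'I_3 -> 'I_n) (beta gamma : R) :
  asymmetric he beta gamma -> 0 <= gamma -> (0 < m)%N ->
  (forall i, [set vars i k | k : 'I_3] = he i) -> beta <= 7%:R / 10%:R ->
  n%:R <= 10%:R * m%:R :> R.
Proof.
move=> asym gamma_ge0 m_gt0 varsE beta_le; rewrite leNgt; apply/negP => sparse.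
pose cover := [set vars t.1 t.2 | t : 'I_m * 'I_3].
have card_cover : #|cover|%:R <= 3 * m%:R :> R.
  by rewrite -natrM ler_nat (leq_trans (leq_imset_card _ _)) // card_prod !card_ord mulnC.
have split_n : #|cover|%:R + #|~: cover|%:R = n%:R :> R by rewrite -natrD cardsC card_ord.
have m_ge1 : 1 <= m%:R :> R by rewrite ler1n.
have beta_n : beta * n%:R <= 7%:R / 10%:R * n%:R by rewrite ler_wpM2r.
have [pi fixedE] : exists pi : {perm 'I_n}, forall x, (pi x == x) = (x \notin ~: cover).
  by apply: exists_perm_moving; rewrite -(ltr_nat R); lra.
have : AUT R (hedges he) pi < 1 - gamma.
  apply: asym; rewrite (_ : [set x | pi x == x] = cover); first lra.
  by apply/setP => x; rewrite inE fixedE inE negbK.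
rewrite AUT_fix; first lra.
  by apply/set0Pn; exists (he (Ordinal m_gt0)); apply/imsetP; exists (Ordinal m_gt0).
move=> _ /imsetP[i _ ->] x; rewrite -varsE => /imsetP[k _ ->].
by apply/eqP; rewrite fixedE inE negbK; apply/imsetP; exists (i, k).
Qed.

Lemma lemma5p2_numeric (R : realFieldType) (c eps beta delta D : R) :
  10%:R^-1 <= c -> 0 <= D -> D <= delta -> delta <= 200%:R^-1 ->
  delta <= eps / (95%:R * c) -> 0 <= beta ->
  9%:R / 10%:R - 100%:R * (eps + beta) <= 1 - D * (c^-1 + 18%:R).
Proof.
move=> c_ge D_ge0 D_le delta_le delta_eps beta_ge0.
have c_gt0 : 0 < c by apply: lt_le_trans c_ge; rewrite invr_gt0 ltr0n.
have D_eps : D * (95%:R * c) <= eps.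
  by rewrite -ler_pdivlMr ?mulr_gt0 ?ltr0n //; apply: le_trans delta_eps.
have cinv_sq : c^-1 * c^-1 <= 100%:R.
  have cinv_le : c^-1 <= 10%:R by rewrite -[c^-1]mul1r ler_pdivrMr //; lra.
  by rewrite (_ : 100%:R = 10%:R * 10%:R) ?ler_pM ?invr_ge0 ?(ltW c_gt0) // -natrM.
have D_cinv : D * c^-1 <= 100%:R * eps / 95%:R.
  have -> : D * c^-1 = D * (95%:R * c) * (c^-1 * c^-1) / 95%:R by field; rewrite gt_eqF.
  rewrite ler_wpM2r ?invr_ge0 ?ler0n // [100%:R * eps]mulrC.
  by rewrite ler_pM ?mulr_ge0 ?invr_ge0 ?ler0n ?(ltW c_gt0).
have eps_ge0 : 0 <= eps by apply: le_trans D_eps; rewrite !mulr_ge0 ?ler0n ?(ltW c_gt0).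
rewrite mulrDr; lra.
Qed.

Unset Implicit Arguments. Set Strict Implicit. Set Printing Implicit Defensive.

Theorem lemma5p2 (R : realFieldType) (n m : nat) (c eps beta gamma : R)
    (he : 'I_m -> {set 'I_n})
    (vars : 'I_m -> 'I_3 -> 'I_n) (rhs : 'I_m -> bool) :
  (forall i, #|he i| = 3%N) ->
  injective he ->
  0 < c -> m%:R = c * n%:R ->
  0 < eps <= 1 -> 0 <= beta <= 1 ->
  degree_bounded he eps (100 * c) ->
  asymmetric he beta gamma ->
  200 * eps <= gamma ->
  (forall i, [set vars i k | k : 'I_3] = he i) ->
  let delta := Num.min (200%:R)^-1 (Num.min (gamma / 48%:R) (eps / (95%:R * c))) in
  GI R (gedges vars rhs) (gedges vars (fun _ => false)) >= 1 - delta ->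
  val3 R vars rhs >= 9%:R / 10%:R - 100%:R * (eps + beta).
Proof.
move=> card3 _ c_gt0 mE /andP[eps_gt0 _] /andP[beta_ge0 _] _ asym gamma_ge varsE delta GI_ge.
have vars_inj i : injective (vars i).
  have /imset_injP vars_inj : #|[set vars i k | k : 'I_3]| == #|'I_3|.
    by rewrite varsE card3 card_ord.
  by move=> k k'; apply: vars_inj.
have := lexx delta; rewrite {2}/delta !le_min => /andP[delta_le /andP[_ delta_eps]].
have [beta_large | beta_small] := lerP (9%:R / 1000%:R) beta.
  have val3_ge0 : 0 <= val3 R vars rhs by rewrite divr_ge0.
  apply: le_trans val3_ge0; lra.
have n_gt0 : (0 < n)%N.
  have /GI_gedges_gt0 nm_gt0 : 0 < GI R (gedges vars rhs) (gedges vars (fun _ => false)) by lra.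
  rewrite lt0n; apply/eqP => n0; move: mE nm_gt0; rewrite n0 mulr0 => /eqP.
  by rewrite pnatr_eq0 => /eqP ->.
have m_gt0 : (0 < m)%N by rewrite -(ltr0n R) mE mulr_gt0 ?ltr0n.
have dense : n%:R <= 10%:R * m%:R :> R by apply: asymmetric_dense asym _ m_gt0 varsE _; lra.
have c_ge : 10%:R^-1 <= c.
  have n_pos : 0 < n%:R :> R by rewrite ltr0n.
  by rewrite -(ler_pM2r n_pos); rewrite mE in dense; lra.
apply: le_trans (val3_ge_GI R rhs vars_inj m_gt0).
rewrite -mulrA (_ : (n + 18 * m)%:R / m%:R = c^-1 + 18%:R); last first.
  by rewrite natrD natrM mE; field; rewrite !gt_eqF ?ltr0n.
apply: lemma5p2_numeric delta_le delta_eps beta_ge0 => //; [by rewrite subr_ge0 GI_le1 | lra].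
Qed.
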